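(* Let $v\in\mathbb{H}\setminus\mathbb{R}$ be written in polar form $v=re^{\theta u}$ with $r=|v|$, $\theta\in\mathbb{R}$ and $u$ a unit imaginary quaternion, and let $\sigma(v)\colon\mathbb{H}\to\mathbb{H}$, $\sigma(v)(x)=vxv^*$. Then $\sigma(v)$ respects the splitting $\mathbb{H}=\mathcal{V}\oplus\mathbb{R}k$, and: (1) the restriction of $\sigma(v)$ to $\mathcal{V}$, identified with $\mathbb{R}^3$ via $(x,y,z)\mapsto x+yi+zj$, is a rotation of angle $2\theta$ about the axis $-uk$, composed with multiplication by $|v|^2$; (2) if $v\in\mathcal{V}$, then the rotation in (1) is also a rotation of angle $2\theta$ in the 2-plane spanned by $1$ and $v$, from $1$ towards $v$; (3) the restriction of $\sigma(v)$ to $\mathbb{R}k$ is multiplication by $|v|^2$.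
   Context: For $q=a+bi+cj+dk\in\mathbb{H}$, $q^*=a+bi+cj-dk$, $\bar q=a-bi-cj-dk$, $|q|^2=q\bar q$. Paravectors $\mathcal{V}=\mathrm{span}_\mathbb{R}\{1,i,j\}$, identified with $\mathbb{R}^3$ by $(x,y,z)\mapsto x+yi+zj$ with the standard orientation (so $(1,i,j)$ is an oriented basis) and dot product; for $u$ imaginary, $-uk\in\mathcal{V}$. Rotation ''from $a$ towards $b$'' in a 2-plane means that for small angles $a$ moves into the half-plane containing $b$; rotations about an axis are right-handed.
   Formalization: Part (2) holds only under the extra hypothesis sin θ > 0, that is, for polar forms with θ in (0, π) modulo 2π. The statement above fails without it. *)

From Stdlib Require Import Reals.
Open Scope R_scope.

(** Quaternions a + b i + c j + d k over R. *)
Record quat := Quat { q0 : R; q1 : R; q2 : R; q3 : R }.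

Definition qadd (p q : quat) : quat :=
  Quat (q0 p + q0 q) (q1 p + q1 q) (q2 p + q2 q) (q3 p + q3 q).
Definition qopp (p : quat) : quat := Quat (- q0 p) (- q1 p) (- q2 p) (- q3 p).
Definition qscale (s : R) (p : quat) : quat :=
  Quat (s * q0 p) (s * q1 p) (s * q2 p) (s * q3 p).
(** Hamilton product (i^2 = j^2 = k^2 = ijk = -1). *)
Definition qmul (p q : quat) : quat :=
  Quat (q0 p * q0 q - q1 p * q1 q - q2 p * q2 q - q3 p * q3 q)
       (q0 p * q1 q + q1 p * q0 q + q2 p * q3 q - q3 p * q2 q)
       (q0 p * q2 q - q1 p * q3 q + q2 p * q0 q + q3 p * q1 q)
       (q0 p * q3 q + q1 p * q2 q - q2 p * q1 q + q3 p * q0 q).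

Definition qreal (a : R) : quat := Quat a 0 0 0.
Definition qone : quat := qreal 1.
Definition qi : quat := Quat 0 1 0 0.
Definition qj : quat := Quat 0 0 1 0.
Definition qk : quat := Quat 0 0 0 1.

Definition qconj (p : quat) : quat := Quat (q0 p) (- q1 p) (- q2 p) (- q3 p).
Definition qstar (p : quat) : quat := Quat (q0 p) (q1 p) (q2 p) (- q3 p).
Definition qnorm2 (p : quat) : R := q0 (qmul p (qconj p)).
Definition qnorm (p : quat) : R := sqrt (qnorm2 p).

Definition is_real_quat (p : quat) : Prop := q1 p = 0 /\ q2 p = 0 /\ q3 p = 0.
Definition is_imag_quat (p : quat) : Prop := q0 p = 0.

(** exp(theta u) for a unit imaginary quaternion u (Euler formula):
    cos theta + sin theta * u. *)
Definition qexp_unit (theta : R) (u : quat) : quat :=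
  qadd (qreal (cos theta)) (qscale (sin theta) u).

Definition qsigma (v x : quat) : quat := qmul (qmul v x) (qstar v).

Definition inV (x : quat) : Prop := q3 x = 0.
Definition inRk (x : quat) : Prop := q0 x = 0 /\ q1 x = 0 /\ q2 x = 0.

Record vec3 := V3 { vx : R; vy : R; vz : R }.
Definition vadd (p q : vec3) : vec3 := V3 (vx p + vx q) (vy p + vy q) (vz p + vz q).
Definition vscale (s : R) (p : vec3) : vec3 := V3 (s * vx p) (s * vy p) (s * vz p).
Definition vdot (p q : vec3) : R := vx p * vx q + vy p * vy q + vz p * vz q.
Definition vnorm (p : vec3) : R := sqrt (vdot p p).
Definition vcross (p q : vec3) : vec3 :=
  V3 (vy p * vz q - vz p * vy q) (vz p * vx q - vx p * vz q) (vx p * vy q - vy p * vx q).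

Definition toV (p : vec3) : quat := Quat (vx p) (vy p) (vz p) 0.
Definition fromV (q : quat) : vec3 := V3 (q0 q) (q1 q) (q2 q).

Definition sigmaV (v : quat) (p : vec3) : vec3 := fromV (qsigma v (toV p)).

Definition linear3 (f : vec3 -> vec3) : Prop :=
  forall (s t : R) (p q : vec3),
    f (vadd (vscale s p) (vscale t q)) = vadd (vscale s (f p)) (vscale t (f q)).

Definition rotation_about (a : vec3) (alpha : R) (f : vec3 -> vec3) : Prop :=
  linear3 f /\ f a = a /\
  forall w, vdot w a = 0 ->
    f w = vadd (vscale (cos alpha) w)
               (vscale (sin alpha) (vcross (vscale (/ vnorm a) a) w)).

(** f is the rotation of angle alpha in the 2-plane spanned by a and b
    (a, b linearly independent), from a towards b: with e1 = a/|a| and e2 the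
    unit vector of the component of b orthogonal to a (so the half-plane
    containing b is {s e1 + t e2 | t > 0}), f e1 = cos alpha e1 + sin alpha e2,
    f e2 = - sin alpha e1 + cos alpha e2, and f fixes the orthogonal
    complement of the plane. *)
Definition rotation_in_plane (a b : vec3) (alpha : R) (f : vec3 -> vec3) : Prop :=
  let e1 := vscale (/ vnorm a) a in
  let b' := vadd b (vscale (- vdot b e1) e1) in
  let e2 := vscale (/ vnorm b') b' in
  linear3 f /\
  f e1 = vadd (vscale (cos alpha) e1) (vscale (sin alpha) e2) /\
  f e2 = vadd (vscale (- sin alpha) e1) (vscale (cos alpha) e2) /\
  (forall w, vdot w a = 0 -> vdot w b = 0 -> f w = w).

From Stdlib Require Import Reals Nsatz Lra.
Open Scope R_scope.

(** For [y] imaginary, [x := - y k] ranges over [V], and since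
    [q^* = - k qbar k] one gets [v x v^* = - (v y vbar) k].  So on [V] the map
    [sigma(v)] is the classical conjugation [y |-> v y vbar] of imaginary
    quaternions, i.e. [|v|^2] times the rotation of angle [2 theta] about [u],
    transported along [y |-> - y k]; in particular its axis becomes [- u k].
    When [v] lies in [V], this axis is orthogonal to [1] and [v], so the
    rotation acts in their plane.  On [R k], [k v^* = vbar k] gives
    [v k v^* = |v|^2 k]. *)

Lemma vec3_ext (p q : vec3) : vx p = vx q -> vy p = vy q -> vz p = vz q -> p = q.
Proof. destruct p, q; simpl; intros; subst; reflexivity. Qed.

Lemma qnorm2_ge0 (p : quat) : 0 <= qnorm2 p.
Proof. destruct p; unfold qnorm2, qmul, qconj; simpl; nra. Qed.

Lemma qnorm_sqr (p : quat) : qnorm p ^ 2 = qnorm2 p.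
Proof. unfold qnorm; rewrite pow2_sqrt; auto using qnorm2_ge0. Qed.

Lemma qnorm_gt0 (v : quat) : ~ is_real_quat v -> 0 < qnorm v.
Proof.
  intros Hv; apply sqrt_lt_R0.
  destruct (qnorm2_ge0 v) as [|E]; [assumption | exfalso; apply Hv].
  destruct v as [v0 v1 v2 v3]; unfold qnorm2, qmul, qconj in E; simpl in E.
  unfold is_real_quat; simpl; repeat split; nra.
Qed.

Lemma qnorm_imag_unit (u : quat) :
  is_imag_quat u -> qnorm u = 1 -> q1 u * q1 u + q2 u * q2 u + q3 u * q3 u = 1.
Proof.
  intros Hu Hu1; rewrite <- (pow1 2), <- Hu1, qnorm_sqr.
  destruct u; unfold is_imag_quat in Hu; simpl in Hu; subst.
  unfold qnorm2, qmul, qconj; simpl; ring.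
Qed.

Lemma qsigma_inV (v x : quat) : inV x -> inV (qsigma v x).
Proof.
  destruct v, x; unfold inV, qsigma, qmul, qstar; simpl; intros ->; ring.
Qed.

Lemma qsigma_inRk (v x : quat) : inRk x -> qsigma v x = qscale (qnorm2 v) x.
Proof.
  destruct v, x; unfold inRk; simpl; intros (-> & -> & ->).
  unfold qsigma, qnorm2, qmul, qstar, qconj, qscale; simpl; f_equal; ring.
Qed.

Lemma inRk_qscale (s : R) (x : quat) : inRk x -> inRk (qscale s x).
Proof. destruct x; unfold inRk, qscale; simpl; intros (-> & -> & ->); lra. Qed.

Lemma sigmaV_qscale (r : R) (v : quat) (p : vec3) :
  sigmaV (qscale r v) p = vscale (r ^ 2) (sigmaV v p).
Proof.
  destruct v, p; unfold sigmaV, qsigma, qscale, qmul, qstar, toV, fromV, vscale.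
  simpl; apply vec3_ext; simpl; ring.
Qed.

Lemma sigmaV_linear (v : quat) : linear3 (sigmaV v).
Proof.
  intros s t [p1 p2 p3] [q1 q2 q3]; destruct v.
  unfold sigmaV, qsigma, qmul, qstar, toV, fromV, vadd, vscale; simpl.
  apply vec3_ext; simpl; ring.
Qed.

Lemma sigmaV_qexp_unit_rotation (theta : R) (u : quat) :
  is_imag_quat u -> qnorm u = 1 ->
  rotation_about (fromV (qopp (qmul u qk))) (2 * theta)
                 (sigmaV (qexp_unit theta u)).
Proof.
  intros Hu Hu1.
  assert (Habc := qnorm_imag_unit u Hu Hu1).
  destruct u as [u0 a b c]; unfold is_imag_quat in Hu; simpl in Hu, Habc; subst u0.
  pose proof (sin2_cos2 theta) as Hsc; unfold Rsqr in Hsc.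
  assert (Hn : vnorm (fromV (qopp (qmul (Quat 0 a b c) qk))) = 1).
  { unfold vnorm, vdot, fromV, qopp, qmul, qk; simpl.
    replace (_ + _ + _) with 1 by nsatz; apply sqrt_1. }
  unfold rotation_about; rewrite Hn, Rinv_1, cos_2a, sin_2a.
  split; [apply sigmaV_linear | split].
  - unfold sigmaV, qsigma, qexp_unit, qmul, qstar, qadd, qreal, qscale, toV, fromV,
      qopp, qk; simpl.
    apply vec3_ext; simpl; nsatz.
  - intros [w1 w2 w3] Hw; unfold vdot, fromV, qopp, qmul, qk in Hw; simpl in Hw.
    unfold sigmaV, qsigma, qexp_unit, qmul, qstar, qadd, qreal, qscale, toV, fromV,
      qopp, qk, vadd, vscale, vcross; simpl.
    apply vec3_ext; simpl; nsatz.
Qed.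

Lemma rotation_in_plane_orthonormal (e1 e2 : vec3) (s t alpha : R)
    (f : vec3 -> vec3) :
  vdot e1 e1 = 1 -> vdot e2 e2 = 1 -> vdot e1 e2 = 0 -> 0 < t ->
  linear3 f ->
  f e1 = vadd (vscale (cos alpha) e1) (vscale (sin alpha) e2) ->
  f e2 = vadd (vscale (- sin alpha) e1) (vscale (cos alpha) e2) ->
  (forall w, vdot w e1 = 0 -> vdot w e2 = 0 -> f w = w) ->
  rotation_in_plane e1 (vadd (vscale s e1) (vscale t e2)) alpha f.
Proof.
  intros H11 H22 H12 Ht Hlin Hf1 Hf2 Hfix.
  assert (He1 : vscale (/ vnorm e1) e1 = e1).
  { unfold vnorm; rewrite H11, sqrt_1, Rinv_1.
    destruct e1; apply vec3_ext; simpl; ring. }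
  set (b := vadd (vscale s e1) (vscale t e2)).
  assert (Hb' : vadd b (vscale (- vdot b e1) e1) = vscale t e2).
  { unfold b; clear - H11 H12.
    destruct e1 as [x1 y1 z1], e2 as [x2 y2 z2]; unfold vdot in *; simpl in *.
    apply vec3_ext; simpl; nsatz. }
  assert (He2 : vscale (/ vnorm (vscale t e2)) (vscale t e2) = e2).
  { assert (Hn : vnorm (vscale t e2) = t).
    { unfold vnorm.
      replace (vdot _ _) with (t ^ 2 * vdot e2 e2)
        by (destruct e2; unfold vdot; simpl; ring).
      rewrite H22, Rmult_1_r; apply sqrt_pow2; lra. }
    rewrite Hn; destruct e2; apply vec3_ext; simpl; field; lra. }
  unfold rotation_in_plane; cbv zeta; rewrite He1, Hb', He2.
  repeat split; auto.
  intros w Hw1 Hwb; apply Hfix; [exact Hw1|].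
  unfold b in Hwb; destruct w, e1 as [x1 y1 z1], e2 as [x2 y2 z2].
  unfold vdot in *; simpl in *.
  apply (Rmult_eq_reg_l t); [nsatz | lra].
Qed.

Lemma rotation_about_plane_of_x_axis (a b alpha : R) (f : vec3 -> vec3) :
  a * a + b * b = 1 ->
  rotation_about (V3 0 (- b) a) alpha f ->
  f (V3 1 0 0) = vadd (vscale (cos alpha) (V3 1 0 0)) (vscale (sin alpha) (V3 0 a b)) /\
  f (V3 0 a b) = vadd (vscale (- sin alpha) (V3 1 0 0)) (vscale (cos alpha) (V3 0 a b)) /\
  (forall w, vdot w (V3 1 0 0) = 0 -> vdot w (V3 0 a b) = 0 -> f w = w).
Proof.
  intros Hab (Hlin & Hfix & Hrot).
  assert (Hn : vscale (/ vnorm (V3 0 (- b) a)) (V3 0 (- b) a) = V3 0 (- b) a).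
  { unfold vnorm, vdot; simpl.
    replace (0 * 0 + (- b) * (- b) + a * a) with 1 by (rewrite <- Hab; ring).
    rewrite sqrt_1, Rinv_1.
    apply vec3_ext; simpl; ring. }
  split; [|split].
  - rewrite Hrot by (unfold vdot; simpl; ring); rewrite Hn.
    apply vec3_ext; simpl; ring.
  - rewrite Hrot by (unfold vdot; simpl; ring); rewrite Hn.
    apply vec3_ext; simpl; clear - Hab; nsatz.
  - intros [w1 w2 w3] Hw1 Hw2; unfold vdot in Hw1, Hw2; simpl in Hw1, Hw2.
    (* orthogonal to the plane, [w] is [l := w . axis] times the unit axis *)
    set (l := a * w3 - b * w2).
    assert (Hw : V3 w1 w2 w3 = vadd (vscale l (V3 0 (- b) a)) (vscale 0 (V3 0 (- b) a))).
    { apply vec3_ext; unfold l; simpl; clear - Hab Hw1 Hw2; nsatz. }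
    rewrite Hw, Hlin, Hfix; reflexivity.
Qed.

Lemma sigmaV_qexp_unit_rotation_in_plane (theta r a b : R) :
  a * a + b * b = 1 -> 0 < r * sin theta ->
  rotation_in_plane (fromV qone) (fromV (qscale r (qexp_unit theta (Quat 0 a b 0))))
    (2 * theta) (sigmaV (qexp_unit theta (Quat 0 a b 0))).
Proof.
  intros Hab Hrs.
  assert (Hrot : rotation_about (V3 0 (- b) a) (2 * theta)
                   (sigmaV (qexp_unit theta (Quat 0 a b 0)))).
  { replace (V3 0 (- b) a) with (fromV (qopp (qmul (Quat 0 a b 0) qk)))
      by (apply vec3_ext; simpl; ring).
    apply sigmaV_qexp_unit_rotation; [reflexivity|].
    unfold qnorm; rewrite <- sqrt_1; f_equal.
    unfold qnorm2, qmul, qconj; simpl; rewrite <- Hab; ring. }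
  destruct (rotation_about_plane_of_x_axis a b _ _ Hab Hrot) as (Hf1 & Hf2 & Hfix).
  replace (fromV (qscale r (qexp_unit theta (Quat 0 a b 0))))
    with (vadd (vscale (r * cos theta) (V3 1 0 0)) (vscale (r * sin theta) (V3 0 a b)))
    by (apply vec3_ext; simpl; ring).
  apply rotation_in_plane_orthonormal; try (unfold vdot; simpl; lra); auto.
  apply Hrot.
Qed.

Theorem proposition2p9 (v u : quat) (r theta : R) :
  ~ is_real_quat v ->
  is_imag_quat u -> qnorm u = 1 ->
  r = qnorm v ->
  v = qscale r (qexp_unit theta u) ->
  (* sigma(v) respects the splitting H = V (+) R k *)
  ((forall x, inV x -> inV (qsigma v x)) /\
   (forall x, inRk x -> inRk (qsigma v x))) /\
  (* (1) and (2) *)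
  (exists rho : vec3 -> vec3,
      rotation_about (fromV (qopp (qmul u qk))) (2 * theta) rho /\
      (forall p, sigmaV v p = vscale (qnorm v ^ 2) (rho p)) /\
      (inV v -> 0 < sin theta ->
         rotation_in_plane (fromV qone) (fromV v) (2 * theta) rho)) /\
  (* (3) *)
  (forall x, inRk x -> qsigma v x = qscale (qnorm v ^ 2) x).
Proof.
  intros Hnr Hu Hu1 Hr Hv.
  split; [split | split].
  - apply qsigma_inV.
  - intros x Hx; rewrite qsigma_inRk by exact Hx; apply inRk_qscale, Hx.
  - exists (sigmaV (qexp_unit theta u)).
    split; [now apply sigmaV_qexp_unit_rotation | split].
    + intros p; rewrite <- Hr, Hv; apply sigmaV_qscale.
    + intros HvV Hsin.
      assert (Hrs : 0 < r * sin theta).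
      { apply Rmult_lt_0_compat; [rewrite Hr; now apply qnorm_gt0 | exact Hsin]. }
      destruct u as [u0 a b c]; unfold is_imag_quat in Hu; simpl in Hu; subst u0 v.
      assert (Hc : c = 0).
      { unfold inV, qscale, qexp_unit, qadd, qreal in HvV; simpl in HvV.
        apply (Rmult_eq_reg_l (r * sin theta)); [rewrite Rmult_0_r, <- HvV; ring | lra]. }
      subst c; apply sigmaV_qexp_unit_rotation_in_plane; [|exact Hrs].
      rewrite <- (qnorm_imag_unit (Quat 0 a b 0) eq_refl Hu1); simpl; ring.
  - intros x Hx; rewrite qsigma_inRk, qnorm_sqr by exact Hx; reflexivity.
Qed.
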